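(* For any edge-set $F\subseteq E(H)$ with $|F|=\ell$ and any tree embedding $(\mathcal T,\mathcal M,y)$ in the support of $\mathcal D$ that is good for $F$, the number of shattered components in $\mathbb Q^F$ is at most $2\ell\beta$.
   Context: Standing setup. $G=(V,E)$ is an undirected graph with $n=|V|$, demand-pairs $(S_i,T_i)$, $i\in[q]$, of subsets of $V$. $\ell\ge1$ is an integer and $E_\ell\subseteq E$ an edge set such that in $(V,E_\ell)$ every $(S_i,T_i)$ is $\ell$-edge-connected. $x:E\to[0,1]$ satisfies $x_e=1$ for $e\in E_\ell$ and $\sum_{e\in\delta_G(X)}x_e\ge \ell+1$ for every $i\in[q]$ and every $X$ with $T_i\subseteq X\subseteq V\setminus S_i$. $\beta\ge1$ is a real. $\mathsf{LARGE}=\{e: x_e\ge 1/(4\ell\beta)\}$ and $H=(V,\mathsf{LARGE})$. Capacities: $\tilde x_e=1/(4\ell\beta)$ if $e\in\mathsf{LARGE}$; $\tilde x_e=0$ if $x_e<\frac{1}{2n^2}\cdot\frac1{4\ell\beta}$; $\tilde x_e=x_e$ otherwise. A tree embedding $(\mathcal T,\mathcal M,y)$ of $(G,\tilde x)$: $\mathcal T$ is a tree; $\mathcal M$ maps nodes of $\mathcal T$ to vertices of $G$ and is a bijection between leaves of $\mathcal T$ and $V$; each tree edge $f=(u,v)$ is mapped to a path $\mathcal M(f)$ in $G$ between $\mathcal M(u)$ and $\mathcal M(v)$; $y(f)=\tilde x(\delta_G(X))$ where $(X,V\setminus X)$ is the leaf partition induced by $\mathcal T-f$. $\mathcal M^{-1}(e)=\{f: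 e\in\mathcal M(f)\}$, $\mathcal M^{-1}(F)=\bigcup_{e\in F}\mathcal M^{-1}(e)$. $\mathcal D$ is a probability distribution over tree embeddings of $(G,\tilde x)$ with $\mathbb{E}_{\mathcal T\sim\mathcal D}[\sum_{f\in\mathcal M^{-1}(e)}y(f)]\le\beta\,\tilde x_e$ for every $e\in E$, and for every tree in its support and all disjoint $A,B\subseteq V$, the maximum $A$–$B$ flow in $\mathcal T$ under $y$ is at least the maximum $A$–$B$ flow in $G$ under $\tilde x$. A tree embedding is good for $F\subseteq E(H)$ if $\sum_{f\in\mathcal M^{-1}(F)}y(f)\le1/2$. $\mathbb Q^F$ is the set of vertex sets of connected components of $(V,E(H)\setminus F)$. A component $Q\in\mathbb Q^F$ is shattered (w.r.t. $\mathcal T$) if its leaves are not all in one connected component of $\mathcal T$ with the edges $\mathcal M^{-1}(F)$ removed. *)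

From HB Require Import structures.
From mathcomp Require Import all_boot all_order all_algebra.
From Stdlib Require List.
Set Implicit Arguments. Unset Strict Implicit. Unset Printing Implicit Defensive.
Import Order.TTheory GRing.Theory Num.Theory.
Local Open Scope ring_scope.

Section Graphs.
Variables (W K : finType) (ends : K -> W * W).

Definition gadj (F : {set K}) : rel W :=
  fun u v => [exists k in F, (ends k == (u, v)) || (ends k == (v, u))].

Definition gconn (F : {set K}) : rel W := connect (gadj F).

Definition gcut (X : {set W}) : {set K} :=
  [set k | ((ends k).1 \in X) != ((ends k).2 \in X)].

Definition gdeg (u : W) : nat :=
  #|[set k | ((ends k).1 == u) || ((ends k).2 == u)]|.

(* a tree: connected, and minimally so (every edge is a bridge; this also
   excludes loops and parallel edges) *)
Definition is_tree : bool :=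
  [forall u, forall v, gconn setT u v] &&
  [forall k, ~~ gconn (setT :\ k) (ends k).1 (ends k).2].

Definition is_leaf (u : W) : bool := (gdeg u <= 1)%N.

(* simple path from a to b: edges es, successive vertices vs (after a),
   all vertices distinct *)
Fixpoint walk_from (a : W) (es : seq K) (vs : seq W) : bool :=
  match es, vs with
  | [::], [::] => true
  | k :: es', v :: vs' =>
      ((ends k == (a, v)) || (ends k == (v, a))) && walk_from v es' vs'
  | _, _ => false
  end.

Definition simple_path (a b : W) (es : seq K) (vs : seq W) : bool :=
  [&& walk_from a es vs, last a vs == b & uniq (a :: vs)].

(* flows: g k is the flow on k in direction (ends k).1 -> (ends k).2 *)
Variable R : numDomainType.

Definition netout (g : K -> R) (w : W) : R :=
  \sum_(k | (ends k).1 == w) g k - \sum_(k | (ends k).2 == w) g k.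

Definition is_flow (cap : K -> R) (A B : {set W}) (g : K -> R) : Prop :=
  (forall k, `|g k| <= cap k) /\
  (forall w, w \notin A -> w \notin B -> netout g w = 0).

Definition flow_value (g : K -> R) (A : {set W}) : R := \sum_(w in A) netout g w.

End Graphs.

Section Setup.
Variables (R : realFieldType) (V E : finType) (ends : E -> V * V).

Definition ledge_connected (l : nat) (El : {set E}) (S T : {set V}) : Prop :=
  forall X : {set V}, T \subset X -> X \subset ~: S ->
    (l <= #|El :&: gcut ends X|)%N.

Definition LARGE (l : nat) (beta : R) (x : E -> R) : {set E} :=
  [set e | (4 * l%:R * beta)^-1 <= x e].

Definition xtilde (n l : nat) (beta : R) (x : E -> R) (e : E) : R :=
  let c := (4 * l%:R * beta)^-1 in
  if c <= x e then c
  else if x e < (2 * (n ^ 2)%:R)^-1 * c then 0 else x e.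

(* tree embedding data: tree nodes, tree edges with endpoints, the node map
   M, the path M(f) (edge sequence) with its vertex sequence *)
Record temb := TEmb {
  tnode : finType;
  tedge : finType;
  tends : tedge -> tnode * tnode;
  tmap : tnode -> V;
  tpath : tedge -> seq E;
  tpverts : tedge -> seq V
}.
Arguments tends t _ : clear implicits.
Arguments tmap t _ : clear implicits.
Arguments tpath t _ : clear implicits.
Arguments tpverts t _ : clear implicits.

Definition leaves (T : temb) : {set tnode T} := [set u | is_leaf (tends T) u].

Definition leaves_in (T : temb) (A : {set V}) : {set tnode T} :=
  [set u in leaves T | tmap T u \in A].

Definition tside (T : temb) (f : tedge T) : {set V} :=
  [set v | [exists u, [&& u \in leaves T, tmap T u == v &
                          gconn (tends T) (setT :\ f) (tends T f).1 u]]].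

Definition ty (xt : E -> R) (T : temb) (f : tedge T) : R :=
  \sum_(e in gcut ends (tside f)) xt e.

Definition Minv (T : temb) (F : {set E}) : {set tedge T} :=
  [set f | has (fun e => e \in F) (tpath T f)].

Definition is_tree_embedding (T : temb) : Prop :=
  [/\ is_tree (tends T),
      {in leaves T &, injective (tmap T)},
      (forall v, exists2 u, u \in leaves T & tmap T u = v) &
      (forall f, simple_path ends (tmap T (tends T f).1) (tmap T (tends T f).2)
                             (tpath T f) (tpverts T f))].

(* max A-B flow in T under y >= max A-B flow in G under xt *)
Definition flow_dominates (xt : E -> R) (T : temb) : Prop :=
  forall A B : {set V}, [disjoint A & B] ->
  forall g : E -> R, is_flow ends xt A B g ->
  exists2 h : tedge T -> R,
    is_flow (tends T) (ty xt (T:=T)) (leaves_in T A) (leaves_in T B) h &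
    flow_value ends g A <= flow_value (tends T) h (leaves_in T A).

(* a finitely supported probability distribution over tree embeddings of
   (G, xt) with the congestion and flow properties *)
Definition good_distribution (xt : E -> R) (beta : R) (D : seq (R * temb)) : Prop :=
  [/\ (forall pT, List.In pT D -> 0 < pT.1),
      \sum_(pT <- D) pT.1 = 1,
      (forall pT, List.In pT D -> is_tree_embedding pT.2 /\ flow_dominates xt pT.2) &
      (forall e, \sum_(pT <- D) pT.1 * (\sum_(f in Minv pT.2 [set e]) ty xt f)
                  <= beta * xt e)].

Definition in_support (D : seq (R * temb)) (T : temb) : Prop :=
  exists2 p, 0 < p & List.In (p, T) D.

Definition good_for (xt : E -> R) (T : temb) (F : {set E}) : Prop :=
  \sum_(f in Minv T F) ty xt f <= 2^-1.

Definition QF (L F : {set E}) : {set {set V}} :=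
  [set [set w | gconn ends (L :\: F) v w] | v in setT].

Definition shattered (T : temb) (F : {set E}) (Q : {set V}) : bool :=
  [exists u1, exists u2,
     [&& u1 \in leaves T, u2 \in leaves T, tmap T u1 \in Q, tmap T u2 \in Q &
         ~~ gconn (tends T) (~: Minv T F) u1 u2]].

End Setup.

(* Each shattered component Q is split by some tree edge f in M^{-1}(F), so an
   edge of LARGE \ F inside Q crosses the cut delta(X_f) and is counted in
   y(f); it determines Q.  Since every LARGE edge carries capacity
   1/(4 l beta), goodness (total y over M^{-1}(F) at most 1/2) allows at most
   2 l beta such (f, edge) pairs, hence at most 2 l beta shattered components. *)
From Stdlib Require List.
From HB Require Import structures.
From mathcomp Require Import all_boot all_order all_algebra ring.
Set Implicit Arguments. Unset Strict Implicit. Unset Printing Implicit Defensive.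
Import Order.TTheory GRing.Theory Num.Theory.

Section Graphs.
Variables (W K : finType) (ends : K -> W * W).
Implicit Types (F : {set K}) (X : {set W}) (k : K).

Lemma gadj_sym F : symmetric (gadj ends F).
Proof.
by move=> u v; apply/existsP/existsP => -[k /andP[kF h]]; exists k; rewrite kF orbC.
Qed.

Lemma gconn_sym F : connect_sym (gadj ends F).
Proof. exact: sym_connect_sym (gadj_sym F). Qed.

Lemma gconn_sub F1 F2 : F1 \subset F2 -> subrel (gconn ends F1) (gconn ends F2).
Proof.
move=> sF12; apply: connect_sub => u v /existsP[k /andP[kF h]].
by apply: connect1; apply/existsP; exists k; rewrite (subsetP sF12 _ kF).
Qed.

Definition gcomp F (v : W) : {set W} := [set w | gconn ends F v w].

Lemma gcomp_eq F u v : gconn ends F u v -> gcomp F u = gcomp F v.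
Proof. by move=> uv; apply/setP => w; rewrite !inE /gconn (same_connect (gconn_sym F) uv). Qed.

Definition gside k : pred W := gconn ends (setT :\ k) (ends k).1.

Lemma gside_eq k u w : gconn ends (setT :\ k) u w -> gside k u = gside k w.
Proof. by move=> uw; rewrite /gside /gconn (same_connect_r (gconn_sym _) uw). Qed.

Lemma path_avoiding_end_gconn k z y p :
  path (gadj ends setT) y p -> z \notin y :: p ->
  ((ends k).1 == z) || ((ends k).2 == z) ->
  gconn ends (setT :\ k) y (last y p).
Proof.
elim: p y => [|y' p IHp] y /=; first by rewrite /gconn connect0.
case/andP=> /existsP[k' /andP[_ yy']] pth; rewrite !inE negb_or => /andP[zy zp] zk.
apply: connect_trans (IHp y' pth zp zk); apply: connect1; apply/existsP; exists k'.
rewrite yy' andbT !inE andbT; apply/eqP => kk'; subst k'.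
have zy' := (norP zp).1.
by case/orP: yy' => /eqP ek; rewrite ek /= in zk;
  case/orP: zk => /eqP ez; subst; rewrite eqxx in zy zy'.
Qed.

Lemma bridge_separates_path Fs :
  (forall k, ~~ gconn ends (setT :\ k) (ends k).1 (ends k).2) ->
  forall u p, path (gadj ends setT) u p -> uniq (u :: p) ->
  ~~ gconn ends (~: Fs) u (last u p) ->
  exists2 f, f \in Fs & gside f u != gside f (last u p).
Proof.
move=> bridge u p; elim: p u => [|v p IHp] u /=.
  by move=> _ _; rewrite /gconn connect0.
case/andP=> /existsP[k /andP[_ uv]] pth /andP[unin up] nconn.
have k_ends : ((ends k).1 == u) || ((ends k).2 == u).
  by case/orP: uv => /eqP ->; rewrite eqxx ?orbT.
have [kFs | kFs] := boolP (k \in Fs); last first.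
  have conn_uv : gconn ends (~: Fs) u v.
    by apply: connect1; apply/existsP; exists k; rewrite inE kFs.
  have [f fFs sep] := IHp v pth up (contra (connect_trans conn_uv) nconn).
  exists f; rewrite // (gside_eq (w := v)) //.
  apply: gconn_sub conn_uv; apply/subsetP => z; rewrite !inE andbT.
  by apply: contraNneq => ->.
exists k => //.
rewrite -(gside_eq (path_avoiding_end_gconn pth unin k_ends)) /gside.
by move: (bridge k); case/orP: uv => /eqP -> /= /negbTE ->; rewrite /gconn connect0.
Qed.

Lemma tree_disconnected_separated Fs u w :
  is_tree ends -> ~~ gconn ends (~: Fs) u w ->
  exists2 f, f \in Fs & gside f u != gside f w.
Proof.
case/andP=> /forallP conn /forallP bridge.
have /connectP[p pth ->] := forallP (conn u) w.
by case/shortenP: pth => p' pth' up' _ /(bridge_separates_path bridge pth' up').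
Qed.

Lemma gconn_cross_cut F X a b :
  gconn ends F a b -> (a \in X) != (b \in X) ->
  exists2 k, k \in F :&: gcut ends X & gconn ends F a (ends k).1.
Proof.
case/connectP=> p + ->; elim: p a => [|c p IHp] a /=; first by rewrite eqxx.
case/andP=> ac pth aX.
have [acX | acX] := eqVneq (a \in X) (c \in X).
  have [|k kF ck] := IHp c pth; first by rewrite -acX.
  by exists k => //; apply: connect_trans (connect1 ac) ck.
have /existsP[k /andP[kF ek]] := ac.
exists k; first by rewrite !inE kF; case/orP: ek acX => /eqP -> //=; rewrite eq_sym.
by case/orP: ek => /eqP -> /=; [apply: connect0 | apply: connect1].
Qed.

End Graphs.

Local Open Scope ring_scope.

Section Embedding.
Variables (R : realFieldType) (V E : finType) (ends : E -> V * V) (T : temb V E).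
Hypotheses (T_tree : is_tree (tends (t:=T))) (leaf_inj : {in leaves T &, injective (tmap (t:=T))}).

Lemma mem_tside_leaf f u :
  u \in leaves T -> (tmap u \in tside f) = gside (tends (t:=T)) f u.
Proof.
move=> lu; rewrite inE; apply/existsP/idP => [[u' /and3P[lu' /eqP uu' side_u']]|].
  by rewrite -(leaf_inj lu' lu uu').
by exists u; rewrite lu eqxx.
Qed.

Definition crossing_pairs (L F : {set E}) : {set tedge T * E} :=
  [set fe | (fe.1 \in Minv T F) && (fe.2 \in (L :\: F) :&: gcut ends (tside fe.1))].

Lemma shattered_crossing (L F : {set E}) (Q : {set V}) :
  Q \in QF ends L F -> shattered T F Q ->
  exists2 fe, fe \in crossing_pairs L F & Q = gcomp ends (L :\: F) (ends fe.2).1.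
Proof.
case/imsetP=> v _ ->{Q} /existsP[u1 /existsP[u2 /and5P[lu1 lu2 vu1 vu2 u12_split]]].
rewrite inE in vu1; rewrite inE in vu2.
have [f fF sep] := tree_disconnected_separated T_tree u12_split.
have conn12 : gconn ends (L :\: F) (tmap u1) (tmap u2).
  by apply: connect_trans vu2; rewrite /gconn gconn_sym.
have [|e eL u1e] := gconn_cross_cut (X := tside f) conn12.
  by rewrite !mem_tside_leaf.
by exists (f, e); [rewrite inE /= fF eL | exact: gcomp_eq (connect_trans vu1 u1e)].
Qed.

Lemma card_shattered_le (L F : {set E}) :
  (#|[set Q in QF ends L F | shattered T F Q]| <= #|crossing_pairs L F|)%N.
Proof.
apply: leq_trans (leq_imset_card (fun fe => gcomp ends (L :\: F) (ends fe.2).1) _).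
apply/subset_leq_card/subsetP => Q; rewrite inE => /andP[QQF shQ].
by have [fe fe_cross ->] := shattered_crossing QQF shQ; apply: imset_f.
Qed.

Lemma card_crossing_pairs_weight (xt : E -> R) (c : R) (L F : {set E}) :
  (forall e, 0 <= xt e) -> {in L, forall e, xt e = c} ->
  #|crossing_pairs L F|%:R * c <= \sum_(f in Minv T F) ty ends xt f.
Proof.
move=> xt_ge0 xtL.
rewrite mulr_natl -sumr_const (eq_bigr (fun fe => xt fe.2)); last first.
  by move=> fe; rewrite inE => /andP[_ /setIP[/setDP[/xtL -> _] _]].
apply: (@le_trans _ _ (\sum_(f in Minv T F)
  \sum_(e in gcut ends (tside f) | e \in L :\: F) xt e)).
  rewrite pair_big_dep le_eqVlt; apply/orP; left.
  by apply/eqP/eq_bigl => -[f e]; rewrite inE /= in_setI [(e \in L :\: F) && _]andbC.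
apply: ler_sum => f _; rewrite [leRHS](bigID (mem (L :\: F))) /=.
by rewrite lerDl sumr_ge0.
Qed.

End Embedding.

Lemma xtilde_ge0 (R : realFieldType) (E : finType) n l (beta : R) (x : E -> R) e :
  0 <= beta -> 0 <= x e -> 0 <= xtilde n l beta x e.
Proof.
move=> beta_ge0 xe_ge0; rewrite /xtilde.
case: ifP => _; first by rewrite invr_ge0 !mulr_ge0.
by case: ifP.
Qed.

Lemma xtilde_LARGE (R : realFieldType) (E : finType) n l (beta : R) (x : E -> R) e :
  e \in LARGE l beta x -> xtilde n l beta x e = (4 * l%:R * beta)^-1.
Proof. by rewrite inE /xtilde => ->. Qed.

Theorem lemma5p9 (R : realFieldType) (V E : finType) (ends : E -> V * V)
  (q : nat) (Sd Td : 'I_q -> {set V}) (l : nat) (El : {set E})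
  (x : E -> R) (beta : R) (D : seq (R * temb V E)) :
  (1 <= l)%N ->
  (forall i, ledge_connected ends l El (Sd i) (Td i)) ->
  (forall e, 0 <= x e <= 1) ->
  (forall e, e \in El -> x e = 1) ->
  (forall i (X : {set V}), Td i \subset X -> X \subset ~: Sd i ->
     l%:R + 1 <= \sum_(e in gcut ends X) x e) ->
  1 <= beta ->
  good_distribution ends (xtilde #|V| l beta x) beta D ->
  forall (F : {set E}) (T : temb V E),
    F \subset LARGE l beta x -> #|F| = l ->
    in_support D T -> good_for ends (xtilde #|V| l beta x) T F ->
    (#|[set Q in QF ends (LARGE l beta x) F | shattered T F Q]|%:R
       <= 2 * l%:R * beta).
Proof.
move=> l_ge1 _ x01 _ _ beta_ge1 [_ _ D_emb _] F T _ _ [p _ inD] good.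
have [[/= T_tree leaf_inj _ _] _] := D_emb _ inD.
set L := LARGE l beta x; set xt := xtilde #|V| l beta x; set m := 4 * l%:R * beta.
have beta_gt0 : 0 < beta := lt_le_trans ltr01 beta_ge1.
have m_gt0 : 0 < m by rewrite /m !mulr_gt0 ?ltr0n.
have xt_ge0 e : 0 <= xt e by apply: xtilde_ge0 (ltW beta_gt0) (andP (x01 e)).1.
have pairs_weight := card_crossing_pairs_weight ends T F xt_ge0 (@xtilde_LARGE _ _ _ _ _ x).
have shattered_le := card_shattered_le ends T_tree leaf_inj L F.
rewrite -(ler_nat R) in shattered_le.
have minv_ge0 : 0 <= m^-1 by rewrite invr_ge0 ltW.
have := le_trans (ler_wpM2r minv_ge0 shattered_le) (le_trans pairs_weight good).
rewrite ler_pdivrMr //; suff -> : 2^-1 * m = 2 * l%:R * beta by [].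
by rewrite /m; field.
Qed.
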